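(* Fix $\nu>0$. (a) $L(\nu/\mu,\mu)\to E(\nu)$ as $\mu\to\infty$, and $\mathrm{L}(\nu/\lambda,\lambda)\to E(\nu)$ as $\lambda\to\infty$. (b) $\mathrm{Ssi}(\nu/\lambda,\lambda)\to\mathrm{Si}(\nu)$ as $\lambda\to\infty$. (c) $\lambda\,\mathrm{Eci}(\nu/\lambda,\lambda)\to i(1-e^{i\nu})$ as $\lambda\to\infty$.
   Context: $L(x,\mu)=\sum_{k=1}^\infty \frac{e^{ikx}}{k+\mu}$; $\mathrm{L}(x,\lambda)=e^{-ix}L\left(2x,\frac{\lambda-1}{2}\right)$; $E(t)=\int_0^\infty\frac{e^{iu}}{u+t}\,du$ for $t>0$; $\mathrm{Si}(t)=\int_0^t\frac{\sin u}{u}\,du$; $\mathrm{Ssi}(x,\lambda)=\int_0^x\frac{\sin\lambda t}{\sin t}\,dt$; $\mathrm{Eci}(x,\lambda)=\int_0^x\frac{e^{it\lambda}}{\cos t}\,dt$. *)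

From Stdlib Require Import Reals.
From Coquelicot Require Export Coquelicot.
Open Scope R_scope.

Definition cis (t : R) : C := (cos t, sin t).

(* L(x,mu) = sum_{k>=1} e^{ikx}/(k+mu), the (conditionally convergent) series,
   as the limit of its partial sums sum_{k=1}^{n+1}. *)
Definition L_term (x mu : R) (k : nat) : C :=
  Cdiv (cis (INR k * x)) (RtoC (INR k + mu)).
Definition L (x mu : R) : C :=
  @lim C_R_CompleteNormedModule
    (filtermap (fun n : nat => sum_n (fun k => L_term x mu (S k)) n) eventually).

Definition Lrm (x lam : R) : C := Cmult (cis (- x)) (L (2 * x) ((lam - 1) / 2)).

Definition E (t : R) : C :=
  @RInt_gen C_R_CompleteNormedModule (fun u => Cdiv (cis u) (RtoC (u + t)))
    (at_point 0) (Rbar_locally p_infty).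

Definition Si (t : R) : R := RInt (fun u => sin u / u) 0 t.

Definition Ssi (x lam : R) : R := RInt (fun t => sin (lam * t) / sin t) 0 x.

Definition Eci (x lam : R) : C :=
  @RInt C_R_CompleteNormedModule (fun t => Cdiv (cis (t * lam)) (RtoC (cos t))) 0 x.

From Stdlib Require Import Reals Lra.
From Coquelicot Require Import Coquelicot.
Open Scope R_scope.

(* Put h = nu/mu.  The Abel factor w(h) = i(e^{-ih} - 1) = h + O(h^2) turns the k-th term
   e^{ikh}/(k + mu) of L(h, mu) into h (int_{(k-1)h}^{kh} e^{iu} du) / (kh + mu h), and when
   mu h lies in [nu - h, nu] this quotient differs from int_{(k-1)h}^{kh} e^{iu}/(u + nu) du by
   at most h^2/((k-1)h + nu)^2.  These errors telescope to O(h), so w(h) L(h, mu) = h (E(nu) + O(h)),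
   where E(nu) converges since integration by parts bounds int_a^b e^{iu}/(u + nu) du by
   4/(a + nu).  Hence L(h, mu) = E(nu) + O(h); the roman L is the case h = 2nu/lam, mu = (lam-1)/2.
   For Ssi and lam Eci the substitution t = y/lam gives int_0^nu of sin y / y, resp. e^{iy},
   times a factor 1 + O(nu/lam) coming from sin(y/lam) ~ y/lam, resp. cos(y/lam) ~ 1. *)

Lemma sin_cubic_bounds (a : R) : 0 <= a <= 1 -> a - a^3/6 <= sin a <= a.
Proof.
  intros Ha. destruct (pre_sin_bound a 0 ltac:(lra) ltac:(lra)) as [H1 H2].
  unfold sin_approx, sin_term in H1, H2; simpl in H1, H2.
  field_simplify in H1. field_simplify in H2.
  assert (0 <= a^2 <= 1) by nra. assert (0 <= a^3) by (apply pow_le; lra).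
  assert (a^5 <= 20 * a^3) by nra. split; lra.
Qed.

Lemma cos_quadratic_bounds (a : R) : -1 <= a <= 1 -> 1 - a^2/2 <= cos a <= 1.
Proof.
  intros Ha. destruct (pre_cos_bound a 0 ltac:(lra) ltac:(lra)) as [H1 _].
  unfold cos_approx, cos_term in H1; simpl in H1. field_simplify in H1.
  split; [lra | apply COS_bound].
Qed.

Lemma Rabs_sin_le (a : R) : Rabs (sin a) <= Rabs a.
Proof.
  assert (Hpos : forall b, 0 <= b -> Rabs (sin b) <= b).
  { intros b Hb. apply Rabs_le. destruct (Rle_lt_dec b 1).
    - pose proof (sin_cubic_bounds b ltac:(lra)). assert (b^3 <= b) by (simpl; nra). lra.
    - pose proof (SIN_bound b). lra. }
  destruct (Rle_lt_dec 0 a).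
  - rewrite (Rabs_pos_eq a) by lra. now apply Hpos.
  - rewrite <- (Rabs_Ropp (sin a)), <- sin_neg, (Rabs_left a) by lra. apply Hpos. lra.
Qed.

Lemma Rdiv_range (y nu lam : R) : 0 < lam -> 0 <= y <= nu -> 0 <= y / lam <= nu / lam.
Proof.
  intros Hlam Hy. split; [apply Rdiv_le_0_compat; lra|].
  apply Rmult_le_compat_r; [left; apply Rinv_0_lt_compat|]; lra.
Qed.

Lemma Cmod_le_Rabs_sum (z : C) : Cmod z <= Rabs (fst z) + Rabs (snd z).
Proof.
  destruct z as [a b]. unfold Cmod; simpl.
  pose proof (Rabs_pos a); pose proof (Rabs_pos b).
  rewrite <- (sqrt_pow2 (Rabs a + Rabs b)) by lra.
  apply sqrt_le_1_alt. rewrite <- (pow2_abs a), <- (pow2_abs b) at 1. nra.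
Qed.

Lemma RtoC_neq_0 (x : R) : x <> 0 -> RtoC x <> RtoC 0.
Proof. intros Hx H. apply Hx. now injection H. Qed.

Lemma Cmod_cis (t : R) : Cmod (cis t) = 1.
Proof.
  unfold Cmod, cis; simpl. rewrite !Rmult_1_r, Rplus_comm.
  change (cos t * cos t) with (Rsqr (cos t)). change (sin t * sin t) with (Rsqr (sin t)).
  now rewrite sin2_cos2, sqrt_1.
Qed.

Lemma Cmod_cis_div_sub (t c1 c2 : R) : c1 <> 0 -> c2 <> 0 ->
  Cmod (Cminus (Cdiv (cis t) (RtoC c1)) (Cdiv (cis t) (RtoC c2))) = Rabs (/ c1 - / c2).
Proof.
  intros Hc1 Hc2.
  replace (Cminus (Cdiv (cis t) (RtoC c1)) (Cdiv (cis t) (RtoC c2)))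
    with (Cmult (cis t) (RtoC (/ c1 - / c2))).
  - now rewrite Cmod_mult, Cmod_cis, Cmod_R, Rmult_1_l.
  - rewrite RtoC_minus, !RtoC_inv by assumption. field. split; now apply RtoC_neq_0.
Qed.

Lemma cis_add (a b : R) : cis (a + b) = Cmult (cis a) (cis b).
Proof. unfold cis, Cmult; simpl. now rewrite cos_plus, sin_plus, (Rplus_comm (_ * _)). Qed.

Lemma cis_div_RtoC (t c : R) : c <> 0 -> Cdiv (cis t) (RtoC c) = (cos t / c, sin t / c).
Proof. intros Hc. unfold Cdiv, Cmult, Cinv, cis, RtoC; simpl. f_equal; field; auto. Qed.

Lemma scal_RtoC (r : R) (z : C) : scal (V:=C_R_NormedModule) r z = Cmult (RtoC r) z.
Proof.
  destruct z as [a b]. unfold Cmult, RtoC; simpl.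
  change (scal (V:=C_R_NormedModule) r (a, b)) with ((r * a, r * b) : C).
  apply injective_projections; simpl; ring.
Qed.

Lemma Cdiv_RtoC_scal (z : C) (c : R) :
  c <> 0 -> Cdiv z (RtoC c) = scal (V:=C_R_NormedModule) (/ c) z.
Proof. intros Hc. rewrite scal_RtoC, RtoC_inv by exact Hc. unfold Cdiv. ring. Qed.

Lemma sum_Sn_C (a : nat -> C) (n : nat) : sum_n a (S n) = Cplus (sum_n a n) (a (S n)).
Proof. rewrite sum_Sn. reflexivity. Qed.

Section NormedLimits.
Context {V : NormedModule R_AbsRing}.

Lemma norm_minus_le (x y r : V) : norm (minus x y) <= norm (minus x r) + norm (minus r y).
Proof. rewrite (minus_trans r). apply norm_triangle. Qed.

Lemma norm_minus_sym (x y : V) : norm (minus x y) = norm (minus y x).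
Proof. now rewrite <- opp_minus, norm_opp. Qed.

Lemma filterlim_of_norm_le {T} {F : (T -> Prop) -> Prop} {FF : Filter F}
    (u : T -> V) (l : V) (e : T -> R) :
  F (fun t => norm (minus (u t) l) <= e t) -> filterlim e F (locally 0) ->
  filterlim u F (locally l).
Proof.
  intros Hb He P [eps HP].
  assert (Hsmall : F (fun t => ball 0 eps (e t))) by exact (He _ (locally_ball 0 eps)).
  unfold filtermap. generalize (filter_and _ _ Hb Hsmall). apply filter_imp.
  intros t [H1 H2]. apply HP, norm_compat1.
  change (Rabs (e t - 0) < eps) in H2. apply Rabs_lt_between in H2. lra.
Qed.

Lemma is_RInt_gen_pinfty_of_filterlim (f : R -> V) (a : R) (I : R -> V) (l : V) :
  (forall b, a <= b -> is_RInt f a b (I b)) ->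
  filterlim I (Rbar_locally p_infty) (locally l) ->
  is_RInt_gen f (at_point a) (Rbar_locally p_infty) l.
Proof.
  intros HI Hl P HP.
  apply Filter_prod with (Q := fun x => x = a) (R := fun b => a < b /\ P (I b)).
  - reflexivity.
  - apply filter_and; [now exists a | exact (Hl P HP)].
  - intros x y -> [Hy HPy]. exists (I y). split; [apply HI; lra | exact HPy].
Qed.

Lemma norm_sum_n_sub_le_telescope (r : nat -> V) (g : nat -> R) :
  (forall k, norm (r (S k)) <= g k - g (S k)) ->
  forall n m, (n <= m)%nat -> norm (minus (sum_n r m) (sum_n r n)) <= g n - g m.
Proof.
  intros Hr n m Hnm. induction Hnm as [|m Hnm IH].
  - rewrite minus_eq_zero. replace (norm _) with 0 by (symmetry; apply norm_zero). lra.
  - eapply Rle_trans; [apply (norm_minus_le _ _ (sum_n r m))|].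
    replace (minus (sum_n r (S m)) (sum_n r m)) with (r (S m)).
    + specialize (Hr m). lra.
    + rewrite sum_Sn. unfold minus. rewrite plus_comm, plus_assoc, plus_opp_l, plus_zero_l.
      reflexivity.
Qed.

End NormedLimits.

Lemma filterlim_div_pinfty (c : R) :
  filterlim (fun x => c / x) (Rbar_locally p_infty) (locally 0).
Proof.
  intros P [eps HP]. exists (Rabs c / eps). intros x Hx. apply HP.
  assert (Hc : 0 <= Rabs c / eps) by (apply Rdiv_le_0_compat; [apply Rabs_pos | apply cond_pos]).
  change (Rabs (c / x - 0) < eps). rewrite Rminus_0_r, Rabs_div, (Rabs_pos_eq x) by lra.
  apply Rlt_div_l; [lra|]. apply Rlt_div_l in Hx; [lra | apply cond_pos].
Qed.

Lemma filterlim_seq_div_affine (c a b : R) : 0 < a -> 0 <= b ->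
  filterlim (fun n => c / (INR n * a + b)) eventually (locally 0).
Proof.
  intros Ha Hb. apply (filterlim_of_norm_le (V:=R_NormedModule) _ _ (fun n => (Rabs c / a) / INR n)).
  - exists 1%nat. intros n Hn. apply le_INR in Hn. simpl in Hn.
    change (Rabs (c / (INR n * a + b) - 0) <= Rabs c / a / INR n).
    rewrite Rminus_0_r, Rabs_div, (Rabs_pos_eq (_ + b)) by nra.
    unfold Rdiv. rewrite Rmult_assoc, <- Rinv_mult.
    apply Rmult_le_compat_l; [apply Rabs_pos|]. apply Rinv_le_contravar; nra.
  - exact (filterlim_comp _ _ _ INR _ _ _ _ is_lim_seq_INR (filterlim_div_pinfty _)).
Qed.

Section CompleteLimits.
Context {V : CompleteNormedModule R_AbsRing}.

Lemma lim_eq_of_filterlim {T} {F : (T -> Prop) -> Prop} {FF : ProperFilter F} (u : T -> V) (l : V) :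
  filterlim u F (locally l) -> lim (filtermap u F) = l.
Proof.
  intros Hl.
  assert (Hcau : cauchy (filtermap u F)) by (intros e; exists l; apply Hl, locally_ball).
  apply (filterlim_locally_unique (FF := Proper_StrongProper _ FF) u); [|exact Hl].
  intros P [eps HP].
  exact (filter_imp _ _ (fun x Hx => HP x Hx) (complete_cauchy _ _ Hcau eps)).
Qed.

Lemma complete_limit_of_cauchy_bound {T} {F : (T -> Prop) -> Prop} {FF : ProperFilter F}
    (u : T -> V) (e : T -> R) (D : T -> Prop) :
  F D -> (forall t, D t -> F (fun s => norm (minus (u s) (u t)) <= e t)) ->
  filterlim e F (locally 0) ->
  exists l, filterlim u F (locally l) /\ forall t, D t -> norm (minus l (u t)) <= e t.
Proof.
  intros HD Hc He.
  assert (Hsmall : forall eps, 0 < eps -> exists t, D t /\ e t < eps).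
  { intros eps Heps.
    assert (Hs : F (fun t => ball 0 (mkposreal _ Heps) (e t))) by exact (He _ (locally_ball 0 _)).
    destruct (filter_ex _ (filter_and _ _ HD Hs)) as [t [Ht Het]].
    exists t. split; [exact Ht|]. change (Rabs (e t - 0) < eps) in Het.
    apply Rabs_lt_between in Het. lra. }
  destruct (proj1 (filterlim_locally_cauchy u)) as [l Hl].
  { intros eps. destruct (Hsmall (eps / 2)) as [t [Ht Het]]; [apply is_pos_div_2|].
    exists (fun s => norm (minus (u s) (u t)) <= e t). split; [now apply Hc|].
    intros s s' Hs Hs'. apply (norm_compat1 (V := V)).
    pose proof (norm_minus_le (V:=V) (u s') (u s) (u t)) as Htri.
    rewrite (norm_minus_sym (V:=V) (u t)) in Htri.
    eapply Rle_lt_trans; [exact Htri|].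
    apply Rle_lt_trans with (e t + e t); [apply Rplus_le_compat; assumption | lra]. }
  exists l. split; [exact Hl|]. intros t Ht. apply Rle_plus_epsilon. intros d Hd.
  assert (Hr : 0 < d / norm_factor (V:=V)) by (apply Rdiv_lt_0_compat; [lra | apply norm_factor_gt_0]).
  assert (Hnear : F (fun s => ball l (mkposreal _ Hr) (u s))) by exact (Hl _ (locally_ball l _)).
  destruct (filter_ex _ (filter_and _ _ (Hc t Ht) Hnear)) as [s [Hs Hls]].
  apply (norm_compat2 (V:=V)) in Hls. simpl in Hls.
  replace (norm_factor * (d / norm_factor)) with d in Hls
    by (field; apply Rgt_not_eq, norm_factor_gt_0).
  pose proof (norm_minus_le (V:=V) l (u t) (u s)) as Htri.
  rewrite (norm_minus_sym (V:=V) l (u s)) in Htri.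
  eapply Rle_trans; [exact Htri|]. rewrite Rplus_comm. apply Rplus_le_compat; [assumption | lra].
Qed.
End CompleteLimits.

(** * The integral E *)

Lemma ex_RInt_of_ex_derive (f : R -> R) (a b : R) :
  (forall x, Rmin a b <= x <= Rmax a b -> ex_derive f x) -> ex_RInt f a b.
Proof.
  intros Hf. apply (ex_RInt_continuous (V:=R_CompleteNormedModule)).
  intros x Hx. apply (ex_derive_continuous (V:=R_NormedModule)), Hf, Hx.
Qed.

Lemma norm_is_RInt_minus_le {V : NormedModule R_AbsRing} (f g : R -> V) (a b : R) (If Ig : V)
    (M : R) :
  a <= b -> is_RInt f a b If -> is_RInt g a b Ig ->
  (forall x, a <= x <= b -> norm (minus (f x) (g x)) <= M) -> norm (minus If Ig) <= (b - a) * M.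
Proof.
  intros Hab Hf Hg HM.
  exact (norm_RInt_le_const _ a b _ M Hab HM (is_RInt_minus _ _ _ _ _ _ Hf Hg)).
Qed.

Lemma is_RInt_dilate {V : NormedModule R_AbsRing} (f : R -> V) (lam x : R) (l : V) :
  is_RInt f 0 (lam * x) l -> is_RInt (fun t => scal lam (f (lam * t))) 0 x l.
Proof.
  intros H. replace 0 with (lam * 0 + 0) in H at 1 by ring.
  replace (lam * x) with (lam * x + 0) in H by ring.
  apply (is_RInt_ext _ _ _ _ _ (fun t _ => f_equal (fun y => scal lam (f y)) (Rplus_0_r (lam * t)))).
  exact (is_RInt_comp_lin f lam 0 0 x l H).
Qed.

Lemma is_RInt_cis (a b : R) :
  is_RInt (V:=C_R_NormedModule) cis a b (Cmult Ci (Cminus (cis a) (cis b))).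
Proof.
  replace (Cmult Ci (Cminus (cis a) (cis b)))
    with ((minus (sin b) (sin a), minus (- cos b) (- cos a)) : C)
    by (unfold Cmult, Cminus, Cplus, Copp, Ci, cis, minus, plus, opp; simpl;
        apply injective_projections; simpl; ring).
  apply (is_RInt_fct_extend_pair (U:=R_NormedModule) (V:=R_NormedModule)).
  - apply (is_RInt_derive (V:=R_CompleteNormedModule) sin); intros x _; unfold cis; simpl;
      [auto_derive; auto; ring | apply continuous_cos].
  - apply (is_RInt_derive (V:=R_CompleteNormedModule) (fun t => - cos t));
      intros x _; unfold cis; simpl;
      [auto_derive; auto; ring | apply continuous_sin].
Qed.

Definition E_integrand (nu u : R) : C := Cdiv (cis u) (RtoC (u + nu)).

Definition E_partial (nu T : R) : C := RInt (V:=C_R_CompleteNormedModule) (E_integrand nu) 0 T.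

Lemma is_RInt_cis_div (c : R -> R) (a b : R) :
  (forall x, Rmin a b <= x <= Rmax a b -> ex_derive c x /\ c x <> 0) ->
  is_RInt (V:=C_R_NormedModule) (fun y => Cdiv (cis y) (RtoC (c y))) a b
    (RInt (fun y => cos y / c y) a b, RInt (fun y => sin y / c y) a b).
Proof.
  intros Hc.
  apply (is_RInt_ext (V:=C_R_NormedModule) (fun y => (cos y / c y, sin y / c y))).
  { intros x Hx. rewrite cis_div_RtoC; [reflexivity|]. apply Hc. lra. }
  apply (is_RInt_fct_extend_pair (U:=R_NormedModule) (V:=R_NormedModule));
    apply (RInt_correct (V:=R_CompleteNormedModule)), ex_RInt_of_ex_derive; simpl;
    intros x Hx; destruct (Hc x Hx); auto_derive; auto.
Qed.

Section ExponentialIntegral.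
Variable nu : R.
Hypothesis Hnu : 0 < nu.

Lemma is_RInt_E_integrand (a b : R) : 0 <= a -> 0 <= b ->
  is_RInt (V:=C_R_NormedModule) (E_integrand nu) a b
    (RInt (fun u => cos u / (u + nu)) a b, RInt (fun u => sin u / (u + nu)) a b).
Proof.
  intros Ha Hb. apply (is_RInt_cis_div (fun u => u + nu)).
  intros x Hx. pose proof (Rmin_glb a b 0 Ha Hb).
  split; [auto_derive; auto | lra].
Qed.

Lemma ex_RInt_E_integrand (a b : R) : 0 <= a -> 0 <= b ->
  ex_RInt (V:=C_R_NormedModule) (E_integrand nu) a b.
Proof. intros Ha Hb. eexists. now apply is_RInt_E_integrand. Qed.

Lemma Rabs_RInt_div_sq_le (P : R -> R) (a b : R) :
  (forall y, ex_derive P y) -> (forall y, Rabs (P y) <= 1) -> 0 <= a <= b ->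
  Rabs (RInt (fun u => P u / (u + nu)^2) a b) <= 1 / (a + nu) - 1 / (b + nu).
Proof.
  intros HP Hb Hab.
  replace (1 / (a + nu) - 1 / (b + nu)) with (minus (-1 / (b + nu)) (-1 / (a + nu)))
    by (unfold minus, plus, opp; simpl; field; lra).
  apply (norm_RInt_le (V:=R_NormedModule) (fun u => P u / (u + nu)^2) (fun u => 1 / (u + nu)^2) a b);
    [lra | | |].
  - intros x Hx. change (Rabs (P x / (x + nu)^2) <= 1 / (x + nu)^2).
    unfold Rdiv. rewrite Rabs_mult, Rabs_inv, (Rabs_pos_eq ((x + nu)^2)) by (apply pow_le; lra).
    apply Rmult_le_compat_r; [|apply Hb]. left. apply Rinv_0_lt_compat, pow_lt. lra.
  - apply (RInt_correct (V:=R_CompleteNormedModule)), ex_RInt_of_ex_derive.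
    intros x Hx. rewrite Rmin_left, Rmax_right in Hx by lra. auto_derive. split; [apply HP | nra].
  - apply (is_RInt_derive (V:=R_CompleteNormedModule) (fun u => -1 / (u + nu))); intros x Hx;
      rewrite Rmin_left, Rmax_right in Hx by lra.
    + auto_derive; [lra | field; lra].
    + apply (ex_derive_continuous (V:=R_NormedModule)). auto_derive. nra.
Qed.

Lemma Rabs_RInt_div_shift_le (p P : R -> R) (a b : R) :
  (forall y, is_derive P y (p y)) -> (forall y, ex_derive p y) -> (forall y, Rabs (P y) <= 1) ->
  0 <= a <= b -> Rabs (RInt (fun u => p u / (u + nu)) a b) <= 2 / (a + nu).
Proof.
  intros HP Hp Hb Hab.
  assert (HP' : forall y, ex_derive P y) by (intros y; eexists; apply HP).
  (* int p/(u+nu) = [P/(u+nu)]_a^b + int P/(u+nu)^2, and each part is at most 1/(a+nu) *)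
  assert (Hparts : is_RInt (fun u => p u / (u + nu) - P u / (u + nu)^2) a b
                     (minus (P b / (b + nu)) (P a / (a + nu)))).
  { apply (is_RInt_derive (V:=R_CompleteNormedModule) (fun u => P u / (u + nu)));
      intros x Hx; rewrite Rmin_left, Rmax_right in Hx by lra.
    - auto_derive; [split; [apply HP' | lra]|].
      replace (Derive (fun y : R => P y) x) with (p x) by (symmetry; apply is_derive_unique, HP).
      field. lra.
    - apply (ex_derive_continuous (V:=R_NormedModule)). auto_derive. repeat split; auto; nra. }
  assert (Hsq : is_RInt (fun u => P u / (u + nu)^2) a b (RInt (fun u => P u / (u + nu)^2) a b)).
  { apply (RInt_correct (V:=R_CompleteNormedModule)), ex_RInt_of_ex_derive.
    intros x Hx. rewrite Rmin_left, Rmax_right in Hx by lra. auto_derive. split; [apply HP' | nra]. }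
  rewrite (is_RInt_unique (V:=R_CompleteNormedModule) (fun u => p u / (u + nu)) a b
             (plus (minus (P b / (b + nu)) (P a / (a + nu))) (RInt (fun u => P u / (u + nu)^2) a b))).
  2:{ eapply (is_RInt_ext (V:=R_NormedModule)); [|exact (is_RInt_plus _ _ _ _ _ _ Hparts Hsq)].
      intros x _. unfold plus; simpl. ring. }
  pose proof (Rabs_RInt_div_sq_le P a b HP' Hb Hab).
  assert (Hend : forall x, a <= x -> Rabs (P x / (x + nu)) <= 1 / (x + nu)).
  { intros x Hx. unfold Rdiv. rewrite Rabs_mult, Rabs_inv, (Rabs_pos_eq (x + nu)) by lra.
    apply Rmult_le_compat_r; [left; apply Rinv_0_lt_compat; lra | apply Hb]. }
  pose proof (Hend a (Rle_refl a)). pose proof (Hend b (proj2 Hab)).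
  set (J := RInt (fun u => P u / (u + nu)^2) a b) in *.
  change (Rabs (P b / (b + nu) + - (P a / (a + nu)) + J) <= 2 / (a + nu)).
  pose proof (Rabs_triang (P b / (b + nu) + - (P a / (a + nu))) J).
  pose proof (Rabs_triang (P b / (b + nu)) (- (P a / (a + nu)))). rewrite Rabs_Ropp in H3.
  unfold Rdiv in *. lra.
Qed.

Lemma Cmod_RInt_E_integrand_le (a b : R) : 0 <= a <= b ->
  Cmod (RInt (V:=C_R_CompleteNormedModule) (E_integrand nu) a b) <= 4 / (a + nu).
Proof.
  intros Hab.
  rewrite (is_RInt_unique (V:=C_R_CompleteNormedModule) _ _ _ _
             (is_RInt_E_integrand a b ltac:(lra) ltac:(lra))).
  eapply Rle_trans; [apply Cmod_le_Rabs_sum|]. simpl.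
  assert (Hmcos : forall y, is_derive (fun t => - cos t) y (sin y))
    by (intros y; auto_derive; auto; ring).
  pose proof (Rabs_RInt_div_shift_le cos sin a b is_derive_sin
                (fun y => ex_intro _ _ (is_derive_cos y)) (fun y => Rabs_le _ _ (SIN_bound y)) Hab).
  pose proof (Rabs_RInt_div_shift_le sin (fun t => - cos t) a b Hmcos
                (fun y => ex_intro _ _ (is_derive_sin y))
                (fun y => ltac:(cbv beta; rewrite Rabs_Ropp; apply Rabs_le, COS_bound)) Hab).
  unfold Rdiv in *. lra.
Qed.

Lemma E_partial_sub (a b : R) : 0 <= a -> 0 <= b ->
  Cminus (E_partial nu b) (E_partial nu a) =
  RInt (V:=C_R_CompleteNormedModule) (E_integrand nu) a b.
Proof.
  intros Ha Hb. unfold E_partial.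
  rewrite <- (RInt_Chasles (V:=C_R_CompleteNormedModule) (E_integrand nu) 0 a b)
    by (apply ex_RInt_E_integrand; lra).
  change (Cminus (Cplus (RInt (V:=C_R_CompleteNormedModule) (E_integrand nu) 0 a)
                        (RInt (V:=C_R_CompleteNormedModule) (E_integrand nu) a b))
                 (RInt (V:=C_R_CompleteNormedModule) (E_integrand nu) 0 a)
          = RInt (V:=C_R_CompleteNormedModule) (E_integrand nu) a b).
  ring.
Qed.

Lemma E_partial_approx (T : R) : 0 <= T -> Cmod (Cminus (E nu) (E_partial nu T)) <= 4 / (T + nu).
Proof.
  destruct (complete_limit_of_cauchy_bound (V:=C_R_CompleteNormedModule)
              (F := Rbar_locally p_infty) (E_partial nu)
              (fun T => 4 / (T + nu)) (fun T => 0 <= T)) as [l [Hl Hbound]].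
  - exists 0. intros x Hx. lra.
  - intros t Ht. exists t. intros s Hs. rewrite <- Cmod_norm.
    change (Cmod (Cminus (E_partial nu s) (E_partial nu t)) <= 4 / (t + nu)).
    rewrite E_partial_sub by lra. apply Cmod_RInt_E_integrand_le. lra.
  - apply (filterlim_of_norm_le (V:=R_NormedModule) _ _ (fun T => 4 / T)); [|apply filterlim_div_pinfty].
    exists 0. intros x Hx. change (Rabs (4 / (x + nu) - 0) <= 4 / x).
    rewrite Rminus_0_r, Rabs_pos_eq by (apply Rdiv_le_0_compat; lra).
    apply Rmult_le_compat_l; [lra|]. apply Rinv_le_contravar; lra.
  - replace (E nu) with l.
    + intros HT. rewrite Cmod_norm. exact (Hbound T HT).
    + symmetry. unfold E. fold (E_integrand nu).
      apply (is_RInt_gen_unique (V:=C_R_CompleteNormedModule) (E_integrand nu)).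
      apply (is_RInt_gen_pinfty_of_filterlim _ 0 (E_partial nu)); [|exact Hl].
      intros b Hb. apply (RInt_correct (V:=C_R_CompleteNormedModule)), ex_RInt_E_integrand; lra.
Qed.
End ExponentialIntegral.


(** * Abel summation of L *)

Lemma Rabs_inv_sub_le (a h nu nu' u : R) : 0 <= a -> 0 < nu -> 0 < h -> nu - h <= nu' <= nu ->
  a <= u <= a + h -> Rabs (/ (a + h + nu') - / (u + nu)) <= h / (a + nu)^2.
Proof.
  intros Ha Hnu Hh Hn Hu.
  set (X := a + h + nu'). set (Y := u + nu).
  assert (HX : a + nu <= X) by (unfold X; lra). assert (HY : a + nu <= Y) by (unfold Y; lra).
  replace (/ X - / Y) with ((Y - X) / (X * Y)) by (field; lra).
  unfold Rdiv. rewrite Rabs_mult, Rabs_inv, (Rabs_pos_eq (X * Y)) by nra.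
  apply Rmult_le_compat; [apply Rabs_pos | left; apply Rinv_0_lt_compat; nra | |].
  - apply Rabs_le. unfold X, Y. lra.
  - apply Rinv_le_contravar; [apply pow_lt; lra | simpl; nra].
Qed.

Lemma Cmod_cell_error_le (nu nu' a h : R) : 0 < nu -> 0 <= a -> 0 < h -> nu - h <= nu' <= nu ->
  Cmod (Cminus (Cdiv (Cmult Ci (Cminus (cis a) (cis (a + h)))) (RtoC (a + h + nu')))
               (RInt (V:=C_R_CompleteNormedModule) (E_integrand nu) a (a + h)))
    <= h * (h / (a + nu)^2).
Proof.
  intros Hnu Ha Hh Hn.
  rewrite Cdiv_RtoC_scal by lra. rewrite Cmod_norm.
  apply Rle_trans with ((a + h - a) * (h / (a + nu)^2)); [|right; ring].
  apply (norm_is_RInt_minus_le (V:=C_R_NormedModule)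
           (fun u => scal (/ (a + h + nu')) (cis u)) (E_integrand nu)); [lra | | |].
  - apply (is_RInt_scal (V:=C_R_NormedModule)), is_RInt_cis.
  - apply (RInt_correct (V:=C_R_CompleteNormedModule)), ex_RInt_E_integrand; lra.
  - intros u Hu. unfold E_integrand. rewrite <- Cdiv_RtoC_scal, <- Cmod_norm by lra.
    change (minus ?x ?y) with (Cminus x y).
    rewrite Cmod_cis_div_sub by lra. now apply Rabs_inv_sub_le.
Qed.

Definition abel_factor (h : R) : C := Cmult Ci (Cminus (cis (- h)) (RtoC 1)).

Lemma abel_factor_bounds (h : R) : 0 < h <= 1 ->
  h / 2 <= Cmod (abel_factor h) /\ Cmod (Cminus (RtoC h) (abel_factor h)) <= h^2.
Proof.
  intros Hh.
  replace (abel_factor h) with ((sin h, cos h - 1) : C).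
  2:{ unfold abel_factor, Cmult, Cminus, Cplus, Copp, Ci, cis, RtoC; simpl.
      rewrite cos_neg, sin_neg. f_equal; ring. }
  pose proof (sin_cubic_bounds h ltac:(lra)). pose proof (cos_quadratic_bounds h ltac:(lra)).
  assert (h^3 <= h^2) by (simpl; nra). assert (h^3 <= h) by (simpl; nra).
  split.
  - eapply Rle_trans; [|apply re_le_Cmod]. simpl. rewrite Rabs_pos_eq; lra.
  - eapply Rle_trans; [apply Cmod_le_Rabs_sum|]. simpl.
    rewrite Rabs_pos_eq by lra. rewrite Rabs_pos_eq by lra. lra.
Qed.

Lemma abel_factor_mul_L_term (h mu : R) (k : nat) : 0 < h -> 0 < INR (S k) * h + mu * h ->
  Cmult (abel_factor h) (L_term h mu (S k)) =
  Cmult (RtoC h) (Cdiv (Cmult Ci (Cminus (cis (INR k * h)) (cis (INR (S k) * h))))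
                       (RtoC (INR (S k) * h + mu * h))).
Proof.
  intros Hh Hpos. unfold L_term, abel_factor.
  replace (INR k * h) with (INR (S k) * h + - h) by (rewrite S_INR; ring).
  rewrite cis_add.
  replace (RtoC (INR (S k) + mu)) with (Cdiv (RtoC (INR (S k) * h + mu * h)) (RtoC h))
    by (rewrite <- RtoC_div by lra; f_equal; field; lra).
  field. split; apply RtoC_neq_0; lra.
Qed.

Definition cell_error (nu nu' h : R) (k : nat) : C :=
  Cminus (Cdiv (Cmult Ci (Cminus (cis (INR k * h)) (cis (INR (S k) * h))))
               (RtoC (INR (S k) * h + nu')))
         (RInt (V:=C_R_CompleteNormedModule) (E_integrand nu) (INR k * h) (INR (S k) * h)).


Definition L_constant (nu : R) : R := 2 * (Cmod (E nu) + (1 / nu + 1 / nu^2)).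

Section AbelSummation.
Variables nu h mu : R.
Hypothesis Hnu : 0 < nu.
Hypothesis Hh : 0 < h <= 1.
Hypothesis Hmu : nu - h <= mu * h <= nu.

Lemma abel_factor_mul_partial_sum (N : nat) :
  Cmult (abel_factor h) (sum_n (fun k => L_term h mu (S k)) N) =
  Cmult (RtoC h) (Cplus (E_partial nu (INR (S N) * h)) (sum_n (cell_error nu (mu * h) h) N)).
Proof.
  assert (Hpos : forall k, 0 < INR (S k) * h + mu * h).
  { intros k. pose proof (pos_INR k). rewrite S_INR. nra. }
  assert (Hnonneg : forall k, 0 <= INR k * h) by (intros k; pose proof (pos_INR k); nra).
  induction N as [|N IH].
  - rewrite !sum_O, abel_factor_mul_L_term by easy.
    unfold cell_error, E_partial. rewrite Rmult_0_l. ring.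
  - rewrite !sum_Sn_C, Cmult_plus_distr_l, IH, abel_factor_mul_L_term by easy.
    unfold cell_error. rewrite <- E_partial_sub by easy. ring.
Qed.

Lemma Cmod_cell_error_bound (k : nat) :
  Cmod (cell_error nu (mu * h) h k) <= h * (h / (INR k * h + nu)^2).
Proof.
  unfold cell_error. rewrite S_INR, Rmult_plus_distr_r, Rmult_1_l.
  apply Cmod_cell_error_le; [easy | pose proof (pos_INR k); nra | lra | easy].
Qed.

Lemma Cmod_cell_error_telescope (k : nat) :
  Cmod (cell_error nu (mu * h) h (S k)) <= h / (INR k * h + nu) - h / (INR (S k) * h + nu).
Proof.
  eapply Rle_trans; [apply Cmod_cell_error_bound|].
  pose proof (pos_INR k). rewrite S_INR.
  set (x := INR k * h + nu). replace ((INR k + 1) * h + nu) with (x + h) by (unfold x; ring).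
  assert (0 < x) by (unfold x; nra).
  replace (h / x - h / (x + h)) with (h * (h / (x * (x + h)))) by (field; lra).
  apply Rmult_le_compat_l; [lra|]. unfold Rdiv. apply Rmult_le_compat_l; [lra|].
  apply Rinv_le_contravar; [nra | simpl; nra].
Qed.

Lemma cell_error_series : exists R : C,
  Cmod R <= h * (1 / nu + 1 / nu^2) /\
  forall N, Cmod (Cminus R (sum_n (cell_error nu (mu * h) h) N)) <= h / (INR N * h + nu).
Proof.
  set (g := fun N => h / (INR N * h + nu)).
  assert (Hg : forall N, 0 <= g N).
  { intros N. pose proof (pos_INR N). unfold g. apply Rdiv_le_0_compat; nra. }
  destruct (complete_limit_of_cauchy_bound (V:=C_R_CompleteNormedModule) (F:=eventually)
              (sum_n (cell_error nu (mu * h) h)) g (fun _ => True)) as [R [_ HR]].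
  - now exists 0%nat.
  - intros n _. exists n. intros m Hm.
    pose proof (norm_sum_n_sub_le_telescope (V:=C_R_NormedModule) _ g
                  (fun k => ltac:(rewrite <- Cmod_norm; apply Cmod_cell_error_telescope)) n m Hm)
      as Htail.
    eapply Rle_trans; [exact Htail|]. specialize (Hg m). lra.
  - apply filterlim_seq_div_affine; lra.
  - exists R. split.
    + specialize (HR 0%nat I). rewrite sum_O, <- Cmod_norm in HR.
      change (minus ?x ?y) with (Cminus x y) in HR.
      pose proof (Cmod_cell_error_bound 0) as H0. unfold g in HR.
      simpl (INR 0) in HR, H0. rewrite Rmult_0_l, Rplus_0_l in HR, H0.
      replace R with (Cplus (Cminus R (cell_error nu (mu * h) h 0)) (cell_error nu (mu * h) h 0))
        by ring.
      eapply Rle_trans; [apply Cmod_triangle|].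
      assert (h * (h / nu^2) <= h * (1 / nu^2)).
      { apply Rmult_le_compat_l; [lra|]. unfold Rdiv.
        apply Rmult_le_compat_r; [left; apply Rinv_0_lt_compat, pow_lt|]; lra. }
      unfold Rdiv in *. lra.
    + intros N. rewrite Cmod_norm. exact (HR N I).
Qed.

Lemma L_abel_representation : exists R : C,
  Cmod R <= h * (1 / nu + 1 / nu^2) /\
  L h mu = Cmult (Cdiv (RtoC h) (abel_factor h)) (Cplus (E nu) R).
Proof.
  destruct cell_error_series as [R [HR HSR]]. exists R. split; [exact HR|].
  destruct (abel_factor_bounds h Hh) as [HW _].
  assert (HW0 : abel_factor h <> RtoC 0) by (intros Hz; rewrite Hz, Cmod_0 in HW; lra).
  assert (Hratio : Cmod (Cdiv (RtoC h) (abel_factor h)) <= 2).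
  { rewrite Cmod_div, Cmod_R, Rabs_pos_eq by (easy || lra).
    apply Rle_div_l; [lra|]. lra. }
  unfold L. apply (lim_eq_of_filterlim (V:=C_R_CompleteNormedModule)).
  apply (filterlim_of_norm_le (V:=C_R_NormedModule) _ _ (fun N => 2 * (4 + h) / (INR N * h + nu)));
    [|apply filterlim_seq_div_affine; lra].
  exists 0%nat. intros N _. rewrite <- Cmod_norm. change (minus ?x ?y) with (Cminus x y).
  pose proof (pos_INR N) as HN.
  rewrite <- (Cmult_1_l (sum_n _ N)), <- (Cinv_l (abel_factor h)), <- Cmult_assoc,
    abel_factor_mul_partial_sum by exact HW0.
  replace (Cminus _ _) with
    (Cmult (Cdiv (RtoC h) (abel_factor h))
       (Cplus (Cminus (E_partial nu (INR (S N) * h)) (E nu))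
              (Cminus (sum_n (cell_error nu (mu * h) h) N) R))) by (field; exact HW0).
  rewrite Cmod_mult.
  assert (Happrox : Cmod (Cminus (E_partial nu (INR (S N) * h)) (E nu)) <= 4 / (INR N * h + nu)).
  { rewrite <- Cmod_opp, Copp_minus_distr, S_INR.
    eapply Rle_trans; [apply E_partial_approx; nra|].
    apply Rmult_le_compat_l; [lra|]. apply Rinv_le_contravar; nra. }
  assert (Htail : Cmod (Cminus (sum_n (cell_error nu (mu * h) h) N) R) <= h / (INR N * h + nu)).
  { rewrite <- Cmod_opp, Copp_minus_distr. apply HSR. }
  pose proof (Cmod_triangle (Cminus (E_partial nu (INR (S N) * h)) (E nu))
                (Cminus (sum_n (cell_error nu (mu * h) h) N) R)).
  replace (2 * (4 + h) / (INR N * h + nu)) with (2 * (4 / (INR N * h + nu) + h / (INR N * h + nu)))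
    by (field; nra).
  apply Rmult_le_compat; [apply Cmod_ge_0 | apply Cmod_ge_0 | exact Hratio | lra].
Qed.

Lemma Cmod_L_sub_E_le : Cmod (Cminus (L h mu) (E nu)) <= h * L_constant nu.
Proof.
  destruct L_abel_representation as [R [HR ->]].
  destruct (abel_factor_bounds h Hh) as [HW Hclose].
  assert (HW0 : abel_factor h <> RtoC 0) by (intros Hz; rewrite Hz, Cmod_0 in HW; lra).
  replace (Cminus _ _) with
    (Cdiv (Cplus (Cmult (Cminus (RtoC h) (abel_factor h)) (E nu)) (Cmult (RtoC h) R)) (abel_factor h))
    by (field; exact HW0).
  rewrite Cmod_div by exact HW0. apply Rle_div_l; [lra|].
  eapply Rle_trans; [apply Cmod_triangle|]. rewrite !Cmod_mult, Cmod_R, Rabs_pos_eq by lra.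
  unfold L_constant. set (c := 1 / nu + 1 / nu^2) in *.
  pose proof (Cmod_ge_0 (E nu)).
  assert (Hc : 0 <= c) by (unfold c; apply Rplus_le_le_0_compat;
                           apply Rdiv_le_0_compat; try apply pow_lt; lra).
  apply Rle_trans with (h * h * (Cmod (E nu) + c)).
  - assert (Cmod (Cminus (RtoC h) (abel_factor h)) * Cmod (E nu) <= h^2 * Cmod (E nu))
      by (apply Rmult_le_compat_r; lra).
    assert (h * Cmod R <= h * (h * c)) by (apply Rmult_le_compat_l; lra).
    simpl in *. lra.
  - replace (h * h * (Cmod (E nu) + c)) with (h * (2 * (Cmod (E nu) + c)) * (h / 2)) by field.
    apply Rmult_le_compat_l; [nra | exact HW].
Qed.
End AbelSummation.

Lemma L_limit (nu : R) : 0 < nu ->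
  filterlim (fun mu => L (nu / mu) mu) (Rbar_locally p_infty) (locally (E nu)).
Proof.
  intros Hnu.
  apply (filterlim_of_norm_le (V:=C_R_NormedModule) _ _ (fun mu => nu * L_constant nu / mu));
    [|apply filterlim_div_pinfty].
  exists nu. intros mu Hmu. rewrite <- Cmod_norm. change (minus ?x ?y) with (Cminus x y).
  replace (nu * L_constant nu / mu) with (nu / mu * L_constant nu) by (field; lra).
  apply Cmod_L_sub_E_le; [exact Hnu | |].
  - split; [apply Rdiv_lt_0_compat | apply Rle_div_l]; lra.
  - replace (mu * (nu / mu)) with nu by (field; lra).
    assert (0 < nu / mu) by (apply Rdiv_lt_0_compat; lra). lra.
Qed.

Lemma Cmod_cis_opp_sub_1_le (x : R) : 0 < x <= 1 -> Cmod (Cminus (cis (- x)) (RtoC 1)) <= 2 * x.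
Proof.
  intros Hx. destruct (abel_factor_bounds x Hx) as [_ Hclose].
  replace (Cmod (Cminus (cis (- x)) (RtoC 1))) with (Cmod (abel_factor x)).
  2:{ unfold abel_factor. now rewrite Cmod_mult, Cmod_Ci, Rmult_1_l. }
  replace (abel_factor x) with (Cminus (RtoC x) (Cminus (RtoC x) (abel_factor x))) by ring.
  eapply Rle_trans; [apply Cmod_triangle|]. rewrite Cmod_opp, Cmod_R, Rabs_pos_eq by lra.
  assert (x^2 <= x) by (simpl; nra). lra.
Qed.

Lemma Lrm_limit (nu : R) : 0 < nu ->
  filterlim (fun lam => Lrm (nu / lam) lam) (Rbar_locally p_infty) (locally (E nu)).
Proof.
  intros Hnu.
  apply (filterlim_of_norm_le (V:=C_R_NormedModule) _ _
           (fun lam => 2 * nu * (L_constant nu + Cmod (E nu)) / lam)); [|apply filterlim_div_pinfty].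
  exists (2 * nu). intros lam Hlam. rewrite <- Cmod_norm. change (minus ?x ?y) with (Cminus x y).
  set (x := nu / lam).
  assert (Hx : 0 < x /\ 2 * x <= 1).
  { unfold x. split; [apply Rdiv_lt_0_compat; lra|].
    replace (2 * (nu / lam)) with (2 * nu / lam) by (field; lra). apply Rle_div_l; lra. }
  (* [Lrm x lam = cis (-x) * L (2x) ((lam-1)/2)] and [(lam-1)/2 * 2x = nu - x] *)
  assert (HL := Cmod_L_sub_E_le nu (2 * x) ((lam - 1) / 2) Hnu ltac:(lra)).
  replace ((lam - 1) / 2 * (2 * x)) with (nu - x) in HL by (unfold x; field; lra).
  specialize (HL ltac:(lra)).
  unfold Lrm.
  replace (Cminus _ (E nu)) with
    (Cplus (Cmult (cis (- x)) (Cminus (L (2 * x) ((lam - 1) / 2)) (E nu)))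
           (Cmult (Cminus (cis (- x)) (RtoC 1)) (E nu))) by ring.
  eapply Rle_trans; [apply Cmod_triangle|]. rewrite !Cmod_mult, Cmod_cis, Rmult_1_l.
  pose proof (Cmod_cis_opp_sub_1_le x ltac:(lra)). pose proof (Cmod_ge_0 (E nu)).
  replace (2 * nu * (L_constant nu + Cmod (E nu)) / lam)
    with (2 * x * L_constant nu + 2 * x * Cmod (E nu)) by (unfold x; field; lra).
  nra.
Qed.

(** * The rescaled integrals Ssi and Eci *)

(* [sin y / y] extended continuously at 0, where Rocq's [0 / 0 = 0] would make it jump *)
Definition sinc (y : R) : R := if Req_EM_T y 0 then 1 else sin y / y.

Lemma sinc_continuous (y : R) : continuous sinc y.
Proof.
  destruct (Req_EM_T y 0) as [->|Hy].
  - intros P [eps HP].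
    destruct (derivable_pt_lim_sin 0 eps (cond_pos eps)) as [d Hd].
    exists d. intros z Hz. apply HP.
    change (Rabs (sinc z - sinc 0) < eps). change (Rabs (z - 0) < d) in Hz.
    unfold sinc. destruct (Req_EM_T 0 0) as [_|]; [|congruence].
    destruct (Req_EM_T z 0) as [->|Hz0].
    + rewrite Rminus_diag, Rabs_R0. apply cond_pos.
    + specialize (Hd z Hz0 ltac:(rewrite Rminus_0_r in Hz; exact Hz)).
      now rewrite Rplus_0_l, sin_0, cos_0, Rminus_0_r in Hd.
  - apply (continuous_ext_loc sinc (fun u => sin u / u)).
    + assert (Hp : 0 < Rabs y) by (apply Rabs_pos_lt; auto).
      exists (mkposreal _ Hp). intros z Hz. change (Rabs (z - y) < Rabs y) in Hz.
      unfold sinc. destruct (Req_EM_T z 0) as [->|]; [|reflexivity].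
      rewrite Rminus_0_l, Rabs_Ropp in Hz. lra.
    + apply (ex_derive_continuous (V:=R_NormedModule) (fun u => sin u / u)). auto_derive. exact Hy.
Qed.

Lemma sinc_bounds (x : R) : 0 <= x <= 1 -> 1 - x^2/6 <= sinc x <= 1.
Proof.
  intros Hx. unfold sinc. destruct (Req_EM_T x 0) as [->|Hx0]; [simpl; lra|].
  pose proof (sin_cubic_bounds x Hx). split.
  - apply Rle_div_r; [lra|]. simpl in *. nra.
  - apply Rle_div_l; lra.
Qed.

Lemma Rabs_sinc_le_1 (y : R) : Rabs (sinc y) <= 1.
Proof.
  unfold sinc. destruct (Req_EM_T y 0); [rewrite Rabs_R1; lra|].
  rewrite Rabs_div by exact n. apply Rle_div_l; [now apply Rabs_pos_lt|].
  rewrite Rmult_1_l. apply Rabs_sin_le.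
Qed.

Lemma Si_eq_RInt_sinc (nu : R) : Si nu = RInt sinc 0 nu.
Proof.
  apply RInt_ext. intros x Hx. unfold sinc.
  destruct (Req_EM_T x 0) as [->|]; [|reflexivity].
  unfold Rmin, Rmax in Hx. destruct (Rle_dec 0 nu); lra.
Qed.

Lemma ex_RInt_sinc_ratio (nu lam : R) : 0 < lam -> 0 <= nu <= lam ->
  ex_RInt (fun y => sinc y / sinc (y / lam)) 0 nu.
Proof.
  intros Hlam Hnu. apply (ex_RInt_continuous (V:=R_CompleteNormedModule)). intros y Hy.
  rewrite Rmin_left, Rmax_right in Hy by lra.
  assert (Hyl : 0 <= y / lam <= 1).
  { rewrite <- (Rdiv_diag lam) by lra. apply Rdiv_range; lra. }
  pose proof (sinc_bounds (y / lam) Hyl).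
  apply (continuous_mult (K:=R_AbsRing) sinc (fun y => / sinc (y / lam))); [apply sinc_continuous|].
  apply continuous_Rinv_comp; [|simpl in *; nra].
  apply (continuous_comp (fun y => y / lam) sinc); [|apply sinc_continuous].
  apply (ex_derive_continuous (V:=R_NormedModule)). auto_derive. lra.
Qed.

Lemma Ssi_eq_RInt_sinc_ratio (nu lam : R) : 0 < lam -> 0 <= nu <= lam ->
  Ssi (nu / lam) lam = RInt (fun y => sinc y / sinc (y / lam)) 0 nu.
Proof.
  intros Hlam Hnu.
  assert (Hx : 0 <= nu / lam <= 1) by (rewrite <- (Rdiv_diag lam) by lra; apply Rdiv_range; lra).
  unfold Ssi. apply (is_RInt_unique (V:=R_CompleteNormedModule)).
  apply (is_RInt_ext (V:=R_NormedModule) (fun t => scal lam (sinc (lam * t) / sinc (lam * t / lam)))).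
  - intros t Ht. rewrite Rmin_left, Rmax_right in Ht by lra.
    pose proof (sin_cubic_bounds t ltac:(lra)).
    assert (0 < sin t) by (simpl in *; nra).
    replace (lam * t / lam) with t by (field; lra).
    unfold scal; simpl; unfold mult; simpl. unfold sinc.
    destruct (Req_EM_T (lam * t) 0); [nra|]. destruct (Req_EM_T t 0); [lra|].
    field. repeat split; lra.
  - apply (is_RInt_dilate (V:=R_NormedModule) (fun y => sinc y / sinc (y / lam))).
    replace (lam * (nu / lam)) with nu by (field; lra).
    apply (RInt_correct (V:=R_CompleteNormedModule)). now apply ex_RInt_sinc_ratio.
Qed.

Lemma Rabs_inv_sinc_sub_1_le (x : R) : 0 <= x <= 1 -> Rabs (/ sinc x - 1) <= x.
Proof.
  intros Hx. pose proof (sinc_bounds x Hx) as [Hlo Hhi].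
  assert (x^2 <= x) by (simpl; nra).
  replace (/ sinc x - 1) with ((1 - sinc x) / sinc x) by (field; lra).
  rewrite Rabs_pos_eq by (apply Rdiv_le_0_compat; lra).
  apply Rle_div_l; [lra|]. nra.
Qed.

Lemma Ssi_limit (nu : R) : 0 < nu ->
  filterlim (fun lam => Ssi (nu / lam) lam) (Rbar_locally p_infty) (locally (Si nu)).
Proof.
  intros Hnu.
  apply (filterlim_of_norm_le (V:=R_NormedModule) _ _ (fun lam => nu ^ 2 / lam));
    [|apply filterlim_div_pinfty].
  exists nu. intros lam Hlam.
  rewrite Ssi_eq_RInt_sinc_ratio, Si_eq_RInt_sinc by lra.
  replace (nu ^ 2 / lam) with ((nu - 0) * (nu / lam)) by (field; lra).
  apply (norm_is_RInt_minus_le (V:=R_NormedModule) (fun y => sinc y / sinc (y / lam)) sinc);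
    [lra | apply (RInt_correct (V:=R_CompleteNormedModule)) .. |].
  - apply ex_RInt_sinc_ratio; lra.
  - apply (ex_RInt_continuous (V:=R_CompleteNormedModule)). intros; apply sinc_continuous.
  - intros y Hy. change (Rabs (sinc y / sinc (y / lam) - sinc y) <= nu / lam).
    pose proof (Rdiv_range y nu lam ltac:(lra) Hy).
    assert (nu / lam <= 1) by (apply Rle_div_l; lra).
    replace (sinc y / sinc (y / lam) - sinc y) with (sinc y * (/ sinc (y / lam) - 1))
      by (unfold Rdiv; ring).
    rewrite Rabs_mult, <- (Rmult_1_l (nu / lam)).
    apply Rmult_le_compat; [apply Rabs_pos | apply Rabs_pos | apply Rabs_sinc_le_1 |].
    eapply Rle_trans; [apply Rabs_inv_sinc_sub_1_le|]; lra.
Qed.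

Lemma cos_small_bounds (x : R) : 0 <= x <= 1/2 -> 1/2 <= cos x /\ Rabs (/ cos x - 1) <= x.
Proof.
  intros Hx. pose proof (cos_quadratic_bounds x ltac:(lra)) as [Hlo Hhi].
  assert (x^2 <= x / 2) by (simpl; nra).
  split; [lra|].
  replace (/ cos x - 1) with ((1 - cos x) / cos x) by (field; lra).
  rewrite Rabs_pos_eq by (apply Rdiv_le_0_compat; lra).
  apply Rle_div_l; [lra|]. nra.
Qed.

Lemma ex_RInt_cis_div_cos (nu lam : R) : 0 < lam -> 0 <= nu -> 2 * nu <= lam ->
  ex_RInt (V:=C_R_NormedModule) (fun y => Cdiv (cis y) (RtoC (cos (y / lam)))) 0 nu.
Proof.
  intros Hlam Hnu Hnu2.
  eexists. apply (is_RInt_cis_div (fun y => cos (y / lam))). intros y Hy.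
  rewrite Rmin_left, Rmax_right in Hy by lra.
  pose proof (Rdiv_range y nu lam Hlam Hy).
  assert (nu / lam <= 1/2) by (apply Rle_div_l; lra).
  destruct (cos_small_bounds (y / lam)) as [Hc _]; [lra|].
  split; [auto_derive; lra | lra].
Qed.

Lemma scaled_Eci_eq_RInt (nu lam : R) : 0 < lam -> 0 <= nu -> 2 * nu <= lam ->
  Cmult (RtoC lam) (Eci (nu / lam) lam) =
  RInt (V:=C_R_CompleteNormedModule) (fun y => Cdiv (cis y) (RtoC (cos (y / lam)))) 0 nu.
Proof.
  intros Hlam Hnu Hnu2.
  set (g := fun y => Cdiv (cis y) (RtoC (cos (y / lam)))).
  assert (Hg : is_RInt (V:=C_R_NormedModule) g 0 nu (RInt (V:=C_R_CompleteNormedModule) g 0 nu))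
    by (apply (RInt_correct (V:=C_R_CompleteNormedModule)), ex_RInt_cis_div_cos; lra).
  unfold Eci.
  rewrite (is_RInt_unique (V:=C_R_CompleteNormedModule) _ 0 (nu / lam)
             (scal (/ lam) (RInt (V:=C_R_CompleteNormedModule) g 0 nu))).
  - rewrite scal_RtoC, RtoC_inv by lra. field. apply RtoC_neq_0. lra.
  - apply (is_RInt_ext (V:=C_R_NormedModule) (fun t => scal (/ lam) (scal lam (g (lam * t))))).
    + intros t _. rewrite scal_assoc.
      replace (mult (/ lam) lam) with (@one R_Ring) by (unfold mult, one; simpl; field; lra).
      rewrite scal_one. unfold g.
      now replace (lam * t / lam) with t by (field; lra); rewrite Rmult_comm.
    + apply (is_RInt_scal (V:=C_R_NormedModule)), (is_RInt_dilate (V:=C_R_NormedModule) g).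
      now replace (lam * (nu / lam)) with nu by (field; lra).
Qed.

Lemma scaled_Eci_limit (nu : R) : 0 < nu ->
  filterlim (fun lam => Cmult (RtoC lam) (Eci (nu / lam) lam)) (Rbar_locally p_infty)
    (locally (Cmult Ci (Cminus (RtoC 1) (cis nu)))).
Proof.
  intros Hnu.
  apply (filterlim_of_norm_le (V:=C_R_NormedModule) _ _ (fun lam => nu ^ 2 / lam));
    [|apply filterlim_div_pinfty].
  exists (2 * nu). intros lam Hlam.
  rewrite scaled_Eci_eq_RInt by lra.
  replace (RtoC 1) with (cis 0) by (unfold cis; now rewrite cos_0, sin_0).
  replace (nu ^ 2 / lam) with ((nu - 0) * (nu / lam)) by (field; lra).
  apply (norm_is_RInt_minus_le (V:=C_R_NormedModule)
           (fun y => Cdiv (cis y) (RtoC (cos (y / lam)))) cis); [lra | | apply is_RInt_cis |].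
  - apply (RInt_correct (V:=C_R_CompleteNormedModule)), ex_RInt_cis_div_cos; lra.
  - intros y Hy. pose proof (Rdiv_range y nu lam ltac:(lra) Hy).
    assert (nu / lam <= 1/2) by (apply Rle_div_l; lra).
    destruct (cos_small_bounds (y / lam)) as [Hc Hclose]; [lra|].
    rewrite <- Cmod_norm. change (minus ?x ?y) with (Cminus x y).
    replace (cis y) with (Cdiv (cis y) (RtoC 1)) at 2 by (field; apply RtoC_neq_0; lra).
    rewrite Cmod_cis_div_sub, Rinv_1 by lra. lra.
Qed.

Theorem proposition6 (nu : R) (Hnu : 0 < nu) :
  (filterlim (fun mu => L (nu / mu) mu) (Rbar_locally p_infty) (locally (E nu)) /\
   filterlim (fun lam => Lrm (nu / lam) lam) (Rbar_locally p_infty) (locally (E nu))) /\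
  filterlim (fun lam => Ssi (nu / lam) lam) (Rbar_locally p_infty) (locally (Si nu)) /\
  filterlim (fun lam => Cmult (RtoC lam) (Eci (nu / lam) lam)) (Rbar_locally p_infty)
    (locally (Cmult Ci (Cminus (RtoC 1) (cis nu)))).
Proof.
  split; [split|split].
  - exact (L_limit nu Hnu).
  - exact (Lrm_limit nu Hnu).
  - exact (Ssi_limit nu Hnu).
  - exact (scaled_Eci_limit nu Hnu).
Qed.
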